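(* Let $G$ be a finite solvable group and let $\psi\neq 1_G$ be a non-trivial ordinary $S$-character of $G$. Then there exists an element $g\in G$ of prime power order $p^k$ ($p$ prime, $k\ge1$) with $\psi(g)=0$.
   Context: An $S$-character of a finite group $G$ is a virtual character $\psi$ (integral linear combination of irreducible complex characters) such that the trivial character $1_G$ occurs in $\psi$ with multiplicity exactly one and $\psi(g)$ is a non-negative real number for all $g\in G$. It is called ordinary if it is an actual character, i.e. all multiplicities of irreducible constituents are non-negative. *)

From HB Require Import structures.
From mathcomp Require Import all_boot all_order all_algebra all_fingroup all_solvable all_field all_character vcharacter.
Set Implicit Arguments. Unset Strict Implicit. Unset Printing Implicit Defensive.
Import Order.TTheory GRing.Theory Num.Theory.
Local Open Scope ring_scope.

(* In algC, [0 <= z]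
   means z is real and non-negative. *)
Definition S_character (gT : finGroupType) (G : {group gT}) (psi : 'CF(G)) :=
  [/\ psi \in 'Z[irr G]%g, '[psi, 1] = 1 & forall g, g \in G -> 0 <= psi g].

Definition ordinary_S_character (gT : finGroupType) (G : {group gT}) (psi : 'CF(G)) :=
  S_character psi /\ psi \is a character.

From mathcomp Require Import all_boot all_order all_algebra all_fingroup all_solvable all_field all_character vcharacter.
Set Implicit Arguments. Unset Strict Implicit. Unset Printing Implicit Defensive.
Import Order.TTheory GRing.Theory Num.Theory.
Local Open Scope group_scope.
Local Open Scope ring_scope.

(* Induct on |G|.  A minimal normal subgroup N of the solvable group G is an
   elementary abelian q-group; averaging psi over the cosets of N gives an
   ordinary S-character phi of G/N.  If phi = 1, then psi is nonnegative on N
   with mean 1 there while psi(1) > 1, and Burnside's vanishing argument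
   produces a zero of psi in N: the product of the values of a character at
   the generators of a cyclic group is fixed by every automorphism of algC,
   hence a rational algebraic integer, so if these values are nonzero they have
   mean at least 1 in absolute value by AM-GM.  If phi <> 1, induction gives a
   p-element xN of G/N with phi(xN) = 0; since psi >= 0, psi vanishes on the
   whole coset xN, which contains the p-part of x. *)

Lemma aut_char_expg (u : {rmorphism algC -> algC}) n gT (G : {group gT})
    (chi : 'CF(G)) :
    (0 < n)%N -> chi \is a character ->
  exists2 m, coprime m n &
    {in G, forall x, (#[x] %| n)%N -> u (chi x) = chi (x ^+ m)%g}.
Proof.
move=> n_gt0 Nchi; have [z pr_z] := C_prim_root_exists n_gt0.
have [m Dm]: {m : 'I_n | u z = z ^+ m}.
  by apply: (prim_rootP pr_z); rewrite -rmorphXn prim_expr_order // rmorph1.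
exists m.
  by rewrite -(prim_root_exp_coprime m pr_z) -Dm fmorph_primitive_root.
move=> x Gx xn; have sxG: <[x]> \subset G by rewrite cycle_subG.
have [r Dchi] := char_sum_irr (cfRes_char <[x]> Nchi).
have chiE y : y \in <[x]> -> chi y = \sum_(i <- r) 'chi_i y.
  by move=> xy; rewrite -(cfResE _ sxG xy) Dchi sum_cfunE.
rewrite !chiE ?mem_cycle ?cycle_id // rmorph_sum; apply: eq_bigr => i _.
have lin_i: 'chi_i \is a linear_char by rewrite irr_cyclic_lin ?cycle_cyclic.
rewrite lin_charX ?cycle_id //; have [j ->]: {j : 'I_n | 'chi_i x = z ^+ j}.
  apply: (prim_rootP pr_z); rewrite -lin_charX ?cycle_id //.
  by move: xn; rewrite order_dvdn => /eqP->; rewrite lin_char1.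
by rewrite rmorphXn Dm exprAC.
Qed.

Lemma aut_prod_char_generators (u : {rmorphism algC -> algC}) gT
    (G : {group gT}) (chi : 'CF(G)) :
    let S := [set s | generator G s] in
  chi \is a character -> u (\prod_(s in S) chi s) = \prod_(s in S) chi s.
Proof.
move=> S Nchi; have [m co_m_G uchiE] := aut_char_expg u (cardG_gt0 G) Nchi.
have genS s : s \in S -> G :=: <[s]> by rewrite inE => /eqP.
have SsubG s : s \in S -> s \in G by move/genS->; apply: cycle_id.
have injS : {in S &, injective (fun s => (s ^+ m)%g)}.
  have co_G_m : coprime #|G| m by rewrite coprime_sym.
  move=> s t /SsubG Gs /SsubG Gt eq_st.
  by rewrite -(expgK co_G_m Gs) -(expgK co_G_m Gt) /= eq_st.
have imS : [set (s ^+ m)%g | s in S] = S.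
  apply/eqP; rewrite eqEcard card_in_imset // leqnn andbT.
  apply/subsetP=> _ /imsetP[s Ss ->]; rewrite inE (genS s Ss).
  by rewrite generator_coprime coprime_sym orderE -(genS s Ss).
rewrite rmorph_prod -[in RHS]imS big_imset //; apply: eq_bigr => s Ss.
by rewrite uchiE ?SsubG // orderE -(genS s Ss).
Qed.

Lemma aut_fixed_prod_char_Crat gT (G : {group gT}) (chi : 'CF(G))
    (A : {set gT}) :
    chi \is a character -> A \subset G ->
    (forall u : {rmorphism algC -> algC},
       u (\prod_(x in A) chi x) = \prod_(x in A) chi x) ->
  \prod_(x in A) chi x \in Crat.
Proof.
move=> Nchi sAG fixA; set P := \prod_(x in A) chi x in fixA *.
(* Qn is a Galois number field containing the values of chi, and each of
   its automorphisms extends to one of algC. *)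
have [Qn galQn [QnC gQnC [_ _ QnG]]] := group_num_field_exists G.
have [b Db]: exists b, QnC b = P.
  apply: (big_ind (fun y => exists b, QnC b = y))
    => [|_ _ [b1 <-] [b2 <-]|x Ax].
  - by exists 1; rewrite rmorph1.
  - by exists (b1 * b2); rewrite rmorphM.
  have [b Db] := QnG _ _ _ Nchi x (order_dvdG (subsetP sAG x Ax)).
  by exists b.
have: b \in fixedField 'Gal({:Qn} / 1).
  apply/(fixedFieldP (memvf b)) => nu _; apply: (fmorph_inj QnC).
  by have [nuC ->] := gQnC nu; rewrite Db fixA.
rewrite (galois_fixedField galQn) => /vlineP[q Dq].
by rewrite -Db Dq rmorphZ_num rmorph1 mulr1 Crat_rat.
Qed.

(* Isaacs, Lemma (3.14), with |chi s| in place of |chi s|^2. *)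
Lemma sum_norm_char_generators gT (G : {group gT}) (chi : 'CF(G)) :
    let S := [set s | generator G s] in
    chi \is a character -> {in S, forall s, chi s != 0} ->
  #|S|%:R <= \sum_(s in S) `|chi s|.
Proof.
move=> S Nchi nz_chiS.
have [-> | S_gt0] := posnP #|S|; first by rewrite sumr_ge0.
have sSG : S \subset G.
  by apply/subsetP=> s; rewrite inE => /eqP->; apply: cycle_id.
have Zprod : \prod_(s in S) chi s \in Num.int.
  apply: Cint_rat_Aint; last by apply: rpred_prod => s _; apply: Aint_char.
  by apply: aut_fixed_prod_char_Crat => // u; apply: aut_prod_char_generators.
have prod_ge1 : 1 <= \prod_(s in S) `|chi s|.
  rewrite -(big_morph Num.norm (@normrM _) (@normr1 _)) norm_intr_ge1 //.
  by apply/prodf_neq0 => s /nz_chiS.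
rewrite -mulr_natr -ler_pdivlMr ?ltr0n // -(expr_ge1 S_gt0); last first.
  by rewrite divr_ge0 ?ler0n ?sumr_ge0.
by rewrite (le_trans prod_ge1) // leif_AGM.
Qed.

Lemma nonneg_char_vanish gT (G : {group gT}) (psi : 'CF(G)) :
    psi \is a character -> {in G, forall x, 0 <= psi x} ->
    \sum_(x in G) psi x = #|G|%:R -> 1 < psi 1%g ->
  exists2 x, x \in G & psi x = 0.
Proof.
move=> Npsi psi_ge0 sum_psi psi1_gt1; apply/exists_eq_inP.
apply: contraFT (lt_geF psi1_gt1) => /exists_inPn nz_psi.
rewrite -(lerD2r (\sum_(x in G^#) psi x)) -big_setD1 //= sum_psi.
rewrite (cardsD1 1%g G) group1 mulrS lerD2l -sumr_const.
rewrite !(partition_big_imset (fun s => <[s]>)) /=.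
apply: ler_sum => _ /imsetP[g /setD1P[ntg Gg] ->].
have sgG : <[g]> \subset G by rewrite cycle_subG.
pose S := [set s | generator <[g]> s]; pose chi := 'Res[<[g]>] psi.
have defS : [pred s in G^# | <[s]> == <[g]>] =i S.
  move=> s; rewrite !inE eq_sym andb_idl // => /eqP eq_sg.
  by rewrite eq_sym -cycle_eq1 -cycle_subG eq_sg cycle_eq1 ntg cycle_subG.
have GS s : s \in S -> s \in G.
  by rewrite inE => /cycle_generator/(subsetP sgG).
have chiE s : s \in S -> psi s = `|chi s|.
  move=> Ss; rewrite cfResE ?cycle_generator -?inE // ger0_norm //.
  exact: psi_ge0 (GS s Ss).
rewrite !(eq_bigl _ _ defS) sumr_const (eq_bigr (fun s => `|chi s|) chiE).
apply: sum_norm_char_generators => [|s Ss]; first exact: cfRes_char.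
by rewrite -normr_eq0 -chiE // nz_psi ?GS.
Qed.

Lemma sum_cfun_cfdot1 gT (G : {group gT}) (phi : 'CF(G)) :
  \sum_(x in G) phi x = #|G|%:R * '[phi, 1].
Proof.
rewrite cfdotE mulVKf ?neq0CG //; apply: eq_bigr => x Gx.
by rewrite cfun1E Gx conjC1 mulr1.
Qed.

Lemma char1_gt1_cfdot1 gT (G : {group gT}) (psi : 'CF(G)) :
  psi \is a character -> '[psi, 1] = 1 -> psi != 1 -> 1 < psi 1%g.
Proof.
move=> Npsi psi1 psi_neq1.
have psi_1 : (0 : Iirr G) \in irr_constt psi.
  by rewrite irr_consttE irr0 psi1 oner_neq0.
have [psi' Npsi' Dpsi] := constt_charP _ Npsi psi_1.
have nz_psi' : psi' 1%g != 0.
  rewrite char1_eq0 //; apply: contraNneq psi_neq1 => psi'0.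
  by rewrite Dpsi psi'0 addr0 irr0.
by rewrite Dpsi cfunE irr0 cfun1E group1 ltrDl lt_def nz_psi' char1_ge0.
Qed.

Lemma char_deflation gT (G N : {group gT}) (psi : 'CF(G)) :
    N <| G -> psi \is a character ->
  exists phi : 'CF(G / N), [/\ phi \is a character, '[phi, 1] = '[psi, 1] &
    {in G, forall x, phi (coset N x) =
      #|N|%:R^-1 * \sum_(n in N) psi (x * n)%g}].
Proof.
move=> nsNG Npsi; have [sNG nNG] := andP nsNG.
pose f x := #|N|%:R^-1 * \sum_(n in N) psi (x * n)%g.
have fP : is_class_fun <<G>> (finfun f).
  rewrite genGid; apply: intro_class_fun => [x y Gx Gy | x notGx].
    congr (_ * _); rewrite (reindex_astabs 'J y) ?astabsJ ?(subsetP nNG) //=.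
    by apply: eq_bigr => n _; rewrite -conjMg cfunJ.
  rewrite /f big1 ?mulr0 // => n Nn; rewrite cfun0 //.
  by rewrite groupMr // (subsetP sNG).
pose F := Cfun 0 fP; have FE x : F x = f x by rewrite cfunE.
have kerF : N \subset cfker F.
  apply/subsetP => n Nn; rewrite inE (subsetP sNG) //=; apply/forallP => y.
  rewrite !FE /f; apply/eqP; congr (_ * _).
  rewrite [RHS](reindex_astabs 'R n) ?astabsR ?(subsetP (normG N)) //=.
  apply: eq_bigr => m _; rewrite -(cfunJ _ _ (subsetP sNG n Nn)).
  by rewrite conjgE !mulgA mulVg mul1g.
have dotF theta : N \subset cfker theta -> '[F, theta] = '[psi, theta].
  move=> kerN; rewrite !cfdotE; congr (_ * _).
  transitivity (#|N|%:R^-1 *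
      \sum_(n in N) \sum_(x in G) psi (x * n)%g * (theta (x * n)%g)^*).
    rewrite exchange_big mulr_sumr /=; apply: eq_bigr => x Gx.
    rewrite FE /f -mulrA mulr_suml; congr (_ * _); apply: eq_bigr => n Nn.
    by rewrite (cfkerMr x (subsetP kerN n Nn)).
  rewrite (eq_bigr (fun _ => \sum_(x in G) psi x * (theta x)^*)); last first.
    move=> n Nn; rewrite [RHS](reindex_astabs 'R n) ?astabsR //=.
    exact: (subsetP sNG).
  set S := \sum_(x in G) _.
  by rewrite sumr_const -(mulr_natl S) mulKf ?neq0CG.
exists (F / N)%CF; split.
- rewrite (cfun_sum_cfdot (F / N)%CF); apply: rpred_sum => i _.
  apply: rpredZ_nat; last exact: irr_char.
  rewrite -(cfMod_iso nsNG) cfQuoK // -mod_IirrE // dotF.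
    exact: Cnat_cfdot_char_irr.
  by rewrite mod_IirrE // cfker_mod.
- by rewrite -(cfMod_iso nsNG) cfQuoK // cfMod_cfun1 dotF // cfker_cfun1.
by move=> x Gx; rewrite cfQuoE // FE.
Qed.

Lemma S_character_deflation gT (G N : {group gT}) (psi : 'CF(G)) :
    N <| G -> ordinary_S_character psi ->
  exists2 phi : 'CF(G / N), ordinary_S_character phi &
    {in G, forall x, phi (coset N x) =
      #|N|%:R^-1 * \sum_(n in N) psi (x * n)%g}.
Proof.
move=> nsNG [[_ psi1 psi_ge0] Npsi].
have [phi [Nphi phi1 phiE]] := char_deflation nsNG Npsi.
exists phi => //; split=> //; split=> [||_ /morphimP[x _ Gx ->]].
- exact: char_vchar.
- by rewrite phi1.
rewrite phiE // mulr_ge0 ?invr_ge0 ?ler0n // sumr_ge0 // => n Nn.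
by rewrite psi_ge0 // groupM // (subsetP (normal_sub nsNG)).
Qed.

Lemma constt_coset_p_elt gT (N : {group gT}) (x : gT) p :
  x \in 'N(N) -> p.-elt (coset N x) -> exists2 n, n \in N & x.`_p = (x * n)%g.
Proof.
move=> Nx p_x; have Nxp : x.`_p \in 'N(N) by rewrite groupX.
have xpN : coset N x.`_p = coset N x.
  by rewrite morph_constt // constt_p_elt.
have [z Nz ->] := kercoset_rcoset Nxp Nx xpN.
by exists (z ^ x)%g; rewrite ?memJ_norm // conjgE !mulgA mulgV mul1g.
Qed.

Lemma S_character_vanish_p_elt gT (G : {group gT}) (psi : 'CF(G)) :
    solvable G -> ordinary_S_character psi -> psi != 1 ->
  exists2 g, g \in G & exists2 p, prime p & p.-elt g /\ psi g = 0.
Proof.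
move: {2}#|G| (leqnn #|G|) => m; elim: m gT G psi => [|m IHm] gT G psi leGm.
  by rewrite leqNgt cardG_gt0 in leGm.
move=> solG Spsi psi_neq1; have [[_ psi1 psi_ge0] Npsi] := Spsi.
have psi1_gt1 := char1_gt1_cfdot1 Npsi psi1 psi_neq1.
have [G1 | ntG] := eqsVneq G 1%g.
  have [|x Gx psi_x0] := nonneg_char_vanish Npsi psi_ge0 _ psi1_gt1.
    by rewrite sum_cfun_cfdot1 psi1 mulr1.
  have /set1P x1 : x \in [1 gT] by rewrite -G1.
  by rewrite -x1 psi_x0 ltr10 in psi1_gt1.
have [N [_ nsNG ntN abN]] := solvable_norm_abelem solG (normal_refl G) ntG.
have [sNG nNG] := andP nsNG.
have [phi Sphi phiE] := S_character_deflation nsNG Spsi.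
have [phi1 | phi_neq1] := eqVneq phi 1.
  have [q q_pr /abelem_pgroup qN] := is_abelemP abN.
  have sumN : \sum_(n in N) 'Res[N] psi n = #|N|%:R.
    have := phiE 1%g (group1 G); rewrite phi1 cfun1E morph1 group1 mulr1n.
    move/esym/(canRL (mulVKf (neq0CG N))); rewrite mulr1 => <-.
    by apply: eq_bigr => n Nn; rewrite cfResE // mul1g.
  have [||n Nn] := nonneg_char_vanish (cfRes_char N Npsi) _ sumN.
  - by move=> n Nn; rewrite cfResE ?psi_ge0 ?(subsetP sNG).
  - by rewrite cfRes1.
  rewrite cfResE // => psi_n0; exists n; first exact: (subsetP sNG).
  by exists q => //; split=> //; apply: mem_p_elt qN Nn.
have leGNm : (#|(G / N)%g| <= m)%N.
  by rewrite -ltnS (leq_trans _ leGm) // ltn_quotient.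
have [_ /morphimP[x Nx Gx ->] [p p_pr [p_x phi_x0]]] :=
  IHm _ _ phi leGNm (quotient_sol N solG) Sphi phi_neq1.
have psi_xN0 : {in N, forall n, psi (x * n)%g = 0}.
  move: phi_x0; rewrite phiE // => /eqP.
  rewrite mulf_eq0 invr_eq0 (negPf (neq0CG N)) => /eqP/psumr_eq0P; apply.
  by move=> n Nn; rewrite psi_ge0 // groupM // (subsetP sNG).
have [n Nn Dxp] := constt_coset_p_elt Nx p_x.
exists x.`_p; first exact: groupX.
by exists p => //; rewrite p_elt_constt Dxp psi_xN0.
Qed.

Theorem proposition3p2 (gT : finGroupType) (G : {group gT}) (psi : 'CF(G)) :
  solvable G -> ordinary_S_character psi -> psi != 1 ->
  exists2 g, g \in G &
    (exists p k : nat, [/\ prime p, (0 < k)%N, #[g]%g = (p ^ k)%N & psi g = 0]).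
Proof.
move=> solG Spsi psi_neq1; have [[_ psi1 _] Npsi] := Spsi.
have [g Gg [p p_pr [p_g psi_g0]]] :=
  S_character_vanish_p_elt solG Spsi psi_neq1.
have [k ord_g] := p_natP p_g.
exists g => //; exists p, k; split=> //; rewrite lt0n; apply/eqP => k0.
move: psi_g0; have /eqP-> : g == 1%g by rewrite -order_eq1 ord_g k0.
by apply/eqP; rewrite gt_eqF // (lt_trans ltr01) // char1_gt1_cfdot1.
Qed.
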